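(* Let $n\ge 2$. For $\alpha=(a_1,\dots,a_{n-1})\in PF_{n-1}$ define $\Psi(\alpha)=(n+1-a_1,\,n+1-a_2,\,\dots,\,n+1-a_{n-1},\,n)$. Then $\Psi$ is a bijection from $PF_{n-1}$ onto $PF_{n,n-1}\setminus PF_{n,n-2}$.
   Context: For $n\in\mathbb{N}$ let $[n]=\{1,\dots,n\}$ and $PP_n=[n]^n$. For an integer $k\ge 0$, the $k$-Naples parking rule: there are $n$ spots numbered $1,\dots,n$ west to east, initially empty; cars $c_1,\dots,c_n$ arrive in order, car $c_i$ preferring spot $a_i$. If spot $a_i$ is empty, $c_i$ parks there. Otherwise $c_i$ checks spots $a_i-1,\dots,a_i-k$ in this order (skipping those $<1$) and parks in the first empty one; if all are occupied, it drives east and parks in the first empty spot numbered greater than $a_i$, failing to park if none exists. $PF_{n,k}$ is the set of preferences in $PP_n$ for which all cars park. $PF_{m}=PF_{m,0}$ is the set of classical parking functions of length $m$. *)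

From mathcomp Require Import all_boot.
Set Implicit Arguments. Unset Strict Implicit. Unset Printing Implicit Defensive.

(* A preference list of length n is a seq nat of size n with entries in [1,n];
   entry i (0-based) is the preferred spot of car c_(i+1). Spots are 1..n. *)
Definition PP (n : nat) (a : seq nat) : bool :=
  (size a == n) && all (fun x => (1 <= x) && (x <= n)) a.

Definition occupied (occ : seq nat) (j : nat) : bool := j \in occ.

Fixpoint first_empty (occ : seq nat) (cands : seq nat) : option nat :=
  match cands with
  | [::] => None
  | c :: cs => if occupied occ c then first_empty occ cs else Some c
  end.

(* Spot chosen by a car with preference a, under the k-Naples rule, with
   n spots and set of occupied spots occ.  Candidates in order:
   a, then a-1, ..., a-k (skipping those < 1), then a+1, ..., n. *)
Definition naples_spot (n k : nat) (occ : seq nat) (a : nat) : option nat :=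
  first_empty occ
    ([:: a] ++ [seq a - i | i <- iota 1 k & i < a]
            ++ iota a.+1 (n - a)).

Fixpoint naples_park (n k : nat) (occ : seq nat) (prefs : seq nat)
  : option (seq nat) :=
  match prefs with
  | [::] => Some occ
  | a :: ps =>
      match naples_spot n k occ a with
      | None => None
      | Some s => naples_park n k (s :: occ) ps
      end
  end.

Definition PF_naples (n k : nat) (a : seq nat) : bool :=
  PP n a && (naples_park n k [::] a != None).

Definition PF (m : nat) (a : seq nat) : bool := PF_naples m 0 a.

Definition Psi (n : nat) (alpha : seq nat) : seq nat :=
  rcons [seq n.+1 - x | x <- alpha] n.

From mathcomp Require Import all_boot.
From mathcomp Require Import zify.
Set Implicit Arguments. Unset Strict Implicit. Unset Printing Implicit Defensive.

(* The map Psi is the reflection y |-> n+1-y (mirror n) followed by a last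
   car preferring spot n.  The proof compares the two parking processes
   through this reflection.
   - For a car with preference a in [2,n], the (n-2)-Naples candidate list is
     the reflection of the classical candidate list of n+1-a on n-1 spots,
     followed by spot 1 (and further spots) when a < n
     (naples_cands_mirror).  Hence a classical run on n-1 spots is mirrored
     step by step by an (n-2)-Naples run that never uses spot 1
     (naples_spot_mirror, naples_park_mirror).
   - A classical parking function fills [1,n-1], so its mirror fills [2,n]
     and the last car, which can only look at n, ..., 2, fails.
   - With k = n-1 every car reaches every spot, so every preference list
     parks; with k = n-2 every car reaches [2,n], so once spot 1 is taken
     everybody parks.  Therefore a list failing under the (n-2)-rule never
     uses spot 1 before its last car, which must prefer n: it is Psi of the
     reflected classical parking function (naples_park_fail_shape). *)

Definition in_spots (n j : nat) : bool := 1 <= j <= n.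

Definition mirror (n : nat) (s : seq nat) : seq nat := [seq n.+1 - y | y <- s].

Lemma mirrorK n s : all (fun y => y <= n.+1) s -> mirror n (mirror n s) = s.
Proof.
elim: s => //= y s IH /andP[Hy Hs]; rewrite IH //; congr cons; lia.
Qed.

Lemma PF_naplesE n k a :
  PF_naples n k a =
  [&& size a == n, all (in_spots n) a & naples_park n k [::] a != None].
Proof. by rewrite /PF_naples /PP -andbA. Qed.

Lemma first_empty_cat (occ : seq nat) c1 c2 :
  first_empty occ (c1 ++ c2) =
  if first_empty occ c1 is Some s then Some s else first_empty occ c2.
Proof. by elim: c1 => //= c cs IH; case: occupied. Qed.

Lemma first_empty_Some (occ : seq nat) c s :
  first_empty occ c = Some s -> s \in c /\ s \notin occ.
Proof.
elim: c => //= c cs IH; rewrite /occupied.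
case: ifP => [_ /IH[Hs ->] | Hc [<-]]; first by rewrite inE Hs orbT.
by rewrite mem_head Hc.
Qed.

Lemma first_empty_None (occ : seq nat) c :
  first_empty occ c = None <-> {subset c <= occ}.
Proof.
elim: c => [|c cs IH] /=; first by split=> // _ j.
rewrite /occupied; case: ifP => Hc; last first.
  by split=> // /(_ c (mem_head c cs)); rewrite Hc.
rewrite IH; split=> H j; last by move=> Hj; apply: H; rewrite inE Hj orbT.
by rewrite inE => /orP[/eqP -> // | /H].
Qed.

Lemma first_empty_map (f : nat -> nat) (occ : seq nat) c :
  {in c & occ, injective f} ->
  first_empty (map f occ) (map f c) = omap f (first_empty occ c).
Proof.
elim: c => //= x c IH inj; rewrite /occupied.
have -> : (f x \in map f occ) = (x \in occ).
  apply/mapP/idP => [[y Hy /inj ->] // | Hx]; first by rewrite mem_head.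
  by exists x.
case: (x \in occ) => //; apply: IH => u v Hu Hv; apply: inj => //.
by rewrite inE Hu orbT.
Qed.

Definition naples_cands (n k a : nat) : seq nat :=
  [:: a] ++ [seq a - i | i <- iota 1 k & i < a] ++ iota a.+1 (n - a).

Lemma naples_spotE n k (occ : seq nat) a :
  naples_spot n k occ a = first_empty occ (naples_cands n k a).
Proof. by []. Qed.

Lemma naples_cands0 m x : naples_cands m 0 x = iota x (m - x).+1.
Proof. by []. Qed.

Lemma filter_iota_lt k a : [seq i <- iota 1 k | i < a] = iota 1 (minn k a.-1).
Proof.
set m := minn k a.-1; have Ek : k = m + (k - m) by lia.
rewrite {1}Ek iotaD filter_cat.
rewrite (eq_in_filter (a2 := pred0) (s := iota (1 + m) _)); last first.
  by move=> i; rewrite mem_iota /= => Hi; apply/negbTE; lia.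
rewrite filter_pred0 cats0; apply/all_filterP/allP => i; rewrite mem_iota; lia.
Qed.

Lemma naples_cands_eq n k a :
  naples_cands n k a =
  [seq a - i | i <- iota 0 (minn k a.-1).+1] ++ iota a.+1 (n - a).
Proof. by rewrite /naples_cands filter_iota_lt /= subn0. Qed.

Lemma mem_down a m j :
  j <= a -> a < j + m -> j \in [seq a - i | i <- iota 0 m].
Proof.
by move=> Hja Ham; apply/mapP; exists (a - j); [rewrite mem_iota|]; lia.
Qed.

Lemma naples_cands_range n k a j :
  1 <= a <= n -> j \in naples_cands n k a -> 1 <= j <= n.
Proof.
move=> Ha; rewrite naples_cands_eq mem_cat mem_iota => /orP[/mapP[i] | ].
- by rewrite mem_iota => Hi ->; lia.
- lia.
Qed.

Lemma mem_naples_cands n k a j :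
  1 <= a <= n -> 1 <= j <= n -> a <= j + minn k a.-1 ->
  j \in naples_cands n k a.
Proof.
move=> Ha Hj Hreach; rewrite naples_cands_eq mem_cat mem_iota.
by case: (leqP j a) => Hja; [rewrite mem_down //; lia | apply/orP; right; lia].
Qed.

Lemma naples_cands_mirror n a :
  2 <= a <= n ->
  naples_cands n n.-2 a =
  mirror n (iota (n.+1 - a) a.-1) ++
  (if a < n then 1 :: iota a.+1 (n - a) else [::]).
Proof.
move=> Ha.
have down : [seq a - i | i <- iota 0 a.-1] = mirror n (iota (n.+1 - a) a.-1).
  rewrite /mirror -{1}(addn0 (n.+1 - a)) iotaDl -map_comp.
  by apply/eq_in_map => i; rewrite mem_iota /= => Hi; lia.
rewrite naples_cands_eq -down; case: ltnP => Han.
- have -> : (minn n.-2 a.-1).+1 = a.-1 + 1 by lia.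
  by rewrite iotaD map_cat -catA /=; congr (_ ++ _ :: _); lia.
- have -> : (minn n.-2 a.-1).+1 = a.-1 by lia.
  by have -> : n - a = 0 by lia.
Qed.

Lemma naples_park_cat n k (occ : seq nat) s1 s2 :
  naples_park n k occ (s1 ++ s2) =
  if naples_park n k occ s1 is Some o then naples_park n k o s2 else None.
Proof. by elim: s1 occ => //= a s IH occ; case: naples_spot. Qed.

Lemma naples_park_inv n k (occ : seq nat) ps fin :
  naples_park n k occ ps = Some fin ->
  uniq occ -> all (in_spots n) occ -> all (in_spots n) ps ->
  [/\ uniq fin, all (in_spots n) fin & size fin = size occ + size ps].
Proof.
elim: ps occ => [|a ps IH] occ /=; first by move=> [<-] *; rewrite addn0.
rewrite naples_spotE; case E: first_empty => [s|] // Hp Hu Ho /andP[Ha Hps].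
have [Hs Hso] := first_empty_Some E.
have Hsr := naples_cands_range Ha Hs.
have [] := IH _ Hp (introT andP (conj Hso Hu)) (introT andP (conj Hsr Ho)) Hps.
by move=> -> -> ->; rewrite /= addSnnS.
Qed.

Lemma naples_park_fills n k alpha fin :
  naples_park n k [::] alpha = Some fin -> all (in_spots n) alpha ->
  size alpha = n -> {subset iota 1 n <= fin}.
Proof.
move=> Hp Hal Hsz.
have [Ufin /allP Afin Sfin] := naples_park_inv Hp isT isT Hal.
have Hsub : {subset fin <= iota 1 n}.
  by move=> y /Afin; rewrite mem_iota /in_spots; lia.
have Hle : size (iota 1 n) <= size fin by rewrite size_iota Sfin Hsz.
have [_ Heq] := uniq_min_size Ufin Hsub Hle.
by move=> j; rewrite Heq.
Qed.

Lemma exists_free_spot n lo (occ : seq nat) :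
  size occ < n -> (forall j, 1 <= j < lo -> j \in occ) ->
  exists2 j, lo <= j <= n & j \notin occ.
Proof.
move=> Hsz Hlo; case: (boolP (all (mem occ) (iota 1 n))) => [/allP Hall | ].
  by have := uniq_leq_size (iota_uniq 1 n) Hall; rewrite size_iota leqNgt Hsz.
case/allPn => j; rewrite mem_iota => Hj Hjn; exists j => //.
case: (leqP lo j) => Hl; first lia.
by case/negP: Hjn; apply: Hlo; lia.
Qed.

Lemma naples_park_all n k lo (occ : seq nat) ps :
  (forall a j, 1 <= a <= n -> lo <= j <= n -> j \in naples_cands n k a) ->
  (forall j, 1 <= j < lo -> j \in occ) ->
  all (in_spots n) ps -> size occ + size ps <= n ->
  naples_park n k occ ps <> None.
Proof.
move=> reach; elim: ps occ => [|a ps IH] occ //= Hlo /andP[Ha Hps] Hsz.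
have Hlt : size occ < n by lia.
have [j Hj Hfree] := exists_free_spot Hlt Hlo.
rewrite naples_spotE; case E: first_empty => [s|].
- by apply: IH => // [i Hi|]; [rewrite inE Hlo ?orbT | rewrite /=; lia].
- move/first_empty_None: E => /(_ j (reach a j Ha Hj)).
  by rewrite (negbTE Hfree).
Qed.

(* Under the (n-2)-Naples rule every car reaches [2,n]: once spot 1 is
   taken, everybody parks. *)
Lemma naples_park_spot1_taken n (occ : seq nat) ps :
  1 \in occ -> all (in_spots n) ps -> size occ + size ps <= n ->
  naples_park n n.-2 occ ps <> None.
Proof.
move=> H1; apply: (naples_park_all (lo := 2)) => [a j Ha Hj | j Hj].
- by apply: mem_naples_cands; lia.
- by have -> : j = 1 by lia.
Qed.

Lemma naples_spot_mirror n (occ : seq nat) x :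
  1 <= x < n -> all (fun y => y < n) occ ->
  naples_spot n n.-2 (mirror n occ) (n.+1 - x) =
  if naples_spot n.-1 0 occ x is Some s then Some (n.+1 - s)
  else if 1 < x then Some 1 else None.
Proof.
move=> Hx /allP Hocc; have Ha : 2 <= n.+1 - x <= n by lia.
rewrite !naples_spotE naples_cands_mirror // naples_cands0 first_empty_cat.
have -> : n.+1 - (n.+1 - x) = x by lia.
have -> : (n.-1 - x).+1 = (n.+1 - x).-1 by lia.
rewrite first_empty_map; last first.
  by move=> u v; rewrite mem_iota => Hu /Hocc Hv; lia.
case: first_empty => [s|] //=.
have one_free : 1 \notin mirror n occ.
  by apply/mapP => -[y /Hocc Hy]; lia.
have -> : (n.+1 - x < n) = (1 < x) by apply/idP/idP; lia.
by case: (1 < x) => //=; rewrite /occupied (negbTE one_free).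
Qed.

Lemma naples_park_mirror n (occ : seq nat) alpha fin :
  all (fun y => y < n) occ -> all (in_spots n.-1) alpha ->
  naples_park n.-1 0 occ alpha = Some fin ->
  naples_park n n.-2 (mirror n occ) (mirror n alpha) = Some (mirror n fin).
Proof.
elim: alpha occ => [|x alpha IH] occ Hocc /=; first by move=> _ [<-].
case/andP=> Hx Halpha; case E: naples_spot => [s|] // Hpark.
have x_range : 1 <= x < n by move: Hx; rewrite /in_spots; lia.
rewrite naples_spot_mirror // E; apply: IH Halpha Hpark.
have [Hs _] := first_empty_Some E; have Hsr := naples_cands_range Hx Hs.
by rewrite /= Hocc andbT; lia.
Qed.

Lemma naples_park_fail_shape n (occ : seq nat) ps :
  all (fun j => 2 <= j <= n) occ -> all (in_spots n) ps ->
  size occ + size ps = n -> naples_park n n.-2 occ ps = None ->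
  exists2 alpha, all (in_spots n.-1) alpha &
    ps = rcons (mirror n alpha) n /\
    naples_park n.-1 0 (mirror n occ) alpha != None.
Proof.
elim: ps occ => [|a ps IH] occ Hocc //= /andP[Ha Hps] Hsz.
have occ_range := allP Hocc.
have one_free : 1 \notin occ by apply/negP => /occ_range; lia.
have spot1 : naples_park n n.-2 (1 :: occ) ps <> None.
  by apply: naples_park_spot1_taken; rewrite ?mem_head //= -Hsz addSnnS.
case: (ltnP 1 a) => Ha2; last first.
  have -> : a = 1 by move: Ha; rewrite /in_spots; lia.
  by rewrite naples_spotE /= /occupied (negbTE one_free).
set x := n.+1 - a; set occ' := mirror n occ.
have Hx : 1 <= x < n by move: Ha; rewrite /in_spots; lia.
have aE : n.+1 - x = a by move: Ha; rewrite /in_spots; lia.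
have occE : mirror n occ' = occ.
  by apply: mirrorK; apply/allP => y /occ_range; lia.
have occ'_lt : all (fun y => y < n) occ'.
  by rewrite all_map; apply/allP => y /occ_range /=; lia.
have := naples_spot_mirror Hx occ'_lt; rewrite occE aE => ->.
case E: (naples_spot n.-1 0 occ' x) => [s|]; last first.
  case: ltnP => // Hx1 _.
  rewrite naples_spotE naples_cands0 in E; have /first_empty_None Hfull := E.
  have := uniq_leq_size (iota_uniq _ _) Hfull; rewrite size_iota size_map.
  case: ps {IH Hps spot1} Hsz => [|p ps] /= Hsz Hle; last by lia.
  by exists [::] => //=; split=> //; congr [:: _]; lia.
have [Hs _] := first_empty_Some E.
have Hsr : 1 <= s <= n.-1 by apply: naples_cands_range Hs; lia.
have Hocc2 : all (fun j => 2 <= j <= n) ((n.+1 - s) :: occ).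
  by rewrite /= Hocc andbT; lia.
have Hsz2 : size ((n.+1 - s) :: occ) + size ps = n by rewrite /=; lia.
move=> Hpark; have [alpha Hal [-> Hp]] := IH _ Hocc2 Hps Hsz2 Hpark.
exists (x :: alpha); first by rewrite /= Hal andbT /in_spots; lia.
split; first by rewrite /= aE.
by rewrite /= E; move: Hp; rewrite /= (_ : n.+1 - (n.+1 - s) = s) //; lia.
Qed.

(* Psi maps spots of [1,n-1] into [2,n] and adds one car. *)
Lemma Psi_PP n alpha : 0 < n -> PF n.-1 alpha -> PP n (Psi n alpha).
Proof.
move=> Hn; rewrite /PF PF_naplesE => /and3P[/eqP Hsz /allP Hal _].
rewrite /PP /Psi size_rcons size_map Hsz all_rcons all_map.
apply/and3P; split; [lia | lia | apply/allP => x /Hal /=].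
by rewrite /in_spots; lia.
Qed.

(* Under the (n-1)-Naples rule every car reaches every spot. *)
Lemma Psi_parks_wide n alpha :
  0 < n -> PF n.-1 alpha -> PF_naples n n.-1 (Psi n alpha).
Proof.
move=> Hn Halpha; have HPP := Psi_PP Hn Halpha.
rewrite /PF_naples HPP; move: HPP; rewrite /PP => /andP[/eqP Hsz Hal].
apply/eqP; apply: (naples_park_all (lo := 1)) => // [a j Ha Hj | j | ].
- by apply: mem_naples_cands; lia.
- lia.
- by rewrite Hsz.
Qed.

(* The mirror of a classical parking function fills [2,n], so the last car,
   preferring n, cannot park under the (n-2)-Naples rule. *)
Lemma Psi_fails_narrow n alpha :
  2 <= n -> PF n.-1 alpha -> naples_park n n.-2 [::] (Psi n alpha) = None.
Proof.
move=> Hn; rewrite /PF PF_naplesE => /and3P[/eqP Hsz Hal].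
case Hp: naples_park => [fin|] // _.
have [_ /allP Afin _] := naples_park_inv Hp isT isT Hal.
have fin_lt : all (fun y => y < n) fin.
  by apply/allP => y /Afin; rewrite /in_spots; lia.
rewrite /Psi -cats1 naples_park_cat (naples_park_mirror _ Hal Hp) //=.
have := @naples_spot_mirror n fin 1 _ fin_lt; rewrite subn1 /= => /(_ Hn) ->.
have full : {subset naples_cands n.-1 0 1 <= fin}.
  rewrite naples_cands0 (_ : (n.-1 - 1).+1 = n.-1); last by lia.
  exact: naples_park_fills Hp Hal Hsz.
by rewrite naples_spotE (proj2 (first_empty_None _ _) full).
Qed.

(* The reflection is an involution on classical preferences. *)
Lemma Psi_inj n : {in PF n.-1 &, injective (Psi n)}.
Proof.
have bounded s : PF n.-1 s -> all (fun y => y <= n.+1) s.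
  rewrite /PF PF_naplesE => /and3P[_ /allP Hs _].
  by apply/allP => y /Hs; rewrite /in_spots; lia.
move=> a1 a2; rewrite !unfold_in => /bounded H1 /bounded H2.
rewrite /Psi => /rcons_inj[E].
by rewrite -(mirrorK H1) -(mirrorK H2) /mirror E.
Qed.

Lemma Psi_onto n beta :
  PP n beta -> naples_park n n.-2 [::] beta = None ->
  exists2 alpha, PF n.-1 alpha & Psi n alpha = beta.
Proof.
rewrite /PP => /andP[/eqP Hsz Hb] Hnone.
have [alpha Hal [Ebeta Hpark]] :=
  @naples_park_fail_shape n [::] beta isT Hb Hsz Hnone.
exists alpha => //; rewrite /PF PF_naplesE Hal Hpark andbT.
by move: Hsz; rewrite Ebeta size_rcons size_map; lia.
Qed.

Theorem theorem2p3 (n : nat) (hn : 2 <= n) :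
  (forall alpha, PF n.-1 alpha ->
     PF_naples n n.-1 (Psi n alpha) && ~~ PF_naples n n.-2 (Psi n alpha)) /\
  {in PF n.-1 &, injective (Psi n)} /\
  (forall beta, PF_naples n n.-1 beta -> ~~ PF_naples n n.-2 beta ->
     exists2 alpha, PF n.-1 alpha & Psi n alpha = beta).
Proof.
have n_pos : 0 < n by lia.
split; last split.
- move=> alpha Halpha.
  by rewrite Psi_parks_wide //= /PF_naples Psi_fails_narrow // andbF.
- exact: Psi_inj.
- move=> beta /andP[Hbeta _]; rewrite /PF_naples Hbeta negbK => /eqP.
  exact: Psi_onto.
Qed.
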